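(* Let $S$ be an $m\times n$ Gaussian embedding, let $\{x_t\}$ be generated by a pre-conditioned first-order method $x_t=x_{t-1}+\sum_{j=0}^{t-1}\alpha_{j,t}H_S^{-1}\nabla f(x_j)$ with deterministic coefficients independent of $n$, and let $p_t\in\mathbb{R}_t^0[X]$ be the polynomial with $\Delta_t=p_t(C_S^{-1})\Delta_0$, for which $\lim_{n\to\infty}\mathbb{E}\|\Delta_t\|^2/\mathbb{E}\|\Delta_0\|^2=\int_a^b p_t^2(\lambda^{-1})\mu_\rho(\lambda)\mathrm{d}\lambda$. Setting $P_t(x)=p_t\!\left(\frac{x}{(1-\rho)^2}\right)$, we have $$\lim_{n\to\infty}\frac{\mathbb{E}\|\Delta_t\|^2}{\mathbb{E}\|\Delta_0\|^2}=(1-\rho)\int_a^b P_t^2(x)\frac{1}{x}\mu_\rho(x)\,\mathrm{d}x.$$ Consequently, if $\{\Pi_t\}$ is a family of polynomials orthogonal with respect to $\mu_\rho$ with $\deg\Pi_t=t$ and $\Pi_t(0)=1$, then $\overline{\Pi}_t(x):=\Pi_t((1-\rho)^2x)$ achieves the minimum $\mathcal{L}^*_{\mu_\rho,t}=\min_{p\in\mathbb{R}_t^0[X]}\int p^2(\lambda^{-1})\mu_\rho(\lambda)\mathrm{d}\lambda$.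
   Context: Setting: $A\in\mathbb{R}^{n\times d}$ of rank $d$, $b\in\mathbb{R}^n$, $f(x)=\frac12\|Ax-b\|^2$, $x^*=\arg\min f$, $d/n\to\gamma\in(0,1)$, $m/n\to\xi\in(\gamma,1)$, $\rho=\gamma/\xi\in(0,1)$. $U$ is the $n\times d$ matrix of left singular vectors of $A$, $H_S=A^\top S^\top SA$, $C_S=U^\top S^\top SU$, $\Delta_t=U^\top A(x_t-x^* )$. A Gaussian embedding has i.i.d. $\mathcal{N}(0,1/m)$ entries. $x_0$ random, independent of $S$, mean zero, with bounded condition number of $U^\top A\mathbb{E}[x_0x_0^\top]A^\top U+U^\top bb^\top U$. $\mu_\rho(x)=\frac{\sqrt{(b-x)_+(x-a)_+}}{2\pi\rho x}$ is the Marchenko–Pastur density with $a=(1-\sqrt\rho)^2$, $b=(1+\sqrt\rho)^2$ (here $a,b$ denote these edges, not the vector $b$). $\mathbb{R}_t^0[X]$: real polynomials of degree at most $t$ with value $1$ at $0$. *)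

From Stdlib Require Import Reals.
From Coquelicot Require Import Coquelicot.
From mathcomp Require Import all_boot all_algebra.
From mathcomp Require Import Rstruct.

Set Implicit Arguments.
Unset Strict Implicit.
Unset Printing Implicit Defensive.

Local Open Scope R_scope.

Definition mp_a (rho : R) : R := (1 - sqrt rho) ^ 2.
Definition mp_b (rho : R) : R := (1 + sqrt rho) ^ 2.

Definition mp_density (rho x : R) : R :=
  sqrt (Rmax (mp_b rho - x) 0 * Rmax (x - mp_a rho) 0) / (2 * PI * rho * x).

Definition Rt0 (t : nat) (p : {poly R}) : Prop :=
  (size p <= t.+1)%N /\ horner p 0 = 1.

Definition Lcost (rho : R) (p : {poly R}) : R :=
  RInt (fun l => (horner p (Rinv l)) ^ 2 * mp_density rho l) (mp_a rho) (mp_b rho).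

Definition mp_orthogonal_family (rho : R) (Pi : nat -> {poly R}) : Prop :=
  (forall t, size (Pi t) = t.+1) /\
  (forall t, horner (Pi t) 0 = 1) /\
  (forall i j, i <> j ->
     RInt (fun x => horner (Pi i) x * horner (Pi j) x * mp_density rho x)
          (mp_a rho) (mp_b rho) = 0).

Definition rescale_poly (c : R) (P : {poly R}) : {poly R} :=
  (P \Po (c *: 'X))%R.

(** The substitution [lambda = (1 - rho)^2 / x] maps the support [[a, b]] of the
    Marchenko–Pastur law onto itself, because [a b = (1 - rho)^2], and transforms
    its density into [(1 - rho) x / (1 - rho)^2] times itself; this turns the cost
    [int p^2(1/lambda) mu_rho(lambda) dlambda] into [(1 - rho) int P^2(x) mu_rho(x)/x dx]
    with [P(x) = p(x / (1 - rho)^2)].  For the optimality, write a competitor with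
    [P(0) = 1] and degree at most [t] as [P = Pi_t + X r] with [deg r < t]; then
    [int P^2/x dmu = int Pi_t^2/x dmu + 2 <Pi_t, r>_mu + int x r^2 dmu], where the
    middle term vanishes by orthogonality and the last one is nonnegative. *)

From Stdlib Require Import Reals Lra.
From Coquelicot Require Import Coquelicot.
From mathcomp Require Import all_boot all_algebra.
From mathcomp Require Import Rstruct.
Import GRing.Theory.

Set Implicit Arguments.
Unset Strict Implicit.

Local Open Scope R_scope.

Section GradedBasis.
Local Open Scope ring_scope.

Variables (F : fieldType) (B : nat -> {poly F}) (L : {poly F} -> F) (t : nat).
Hypothesis size_B : forall k, (k < t)%N -> size (B k) = k.+1.
Hypothesis LD : forall p q, L (p + q) = L p + L q.
Hypothesis LZ : forall c p, L (c *: p) = c * L p.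
Hypothesis LB : forall k, (k < t)%N -> L (B k) = 0.

Lemma graded_basis_annihilator (r : {poly F}) : (size r <= t)%N -> L r = 0.
Proof.
suff {r} L0 : forall k, (k <= t)%N -> forall r : {poly F}, (size r <= k)%N -> L r = 0.
  by move=> szr; apply: (L0 t).
elim=> [|k IH] lekt r szr.
  move: szr; rewrite leqn0 size_poly_eq0 => /eqP ->.
  by rewrite -(scale0r 0) LZ mul0r.
have ltkt : (k < t)%N := lekt.
have lcB : lead_coef (B k) != 0 by rewrite lead_coef_eq0 -size_poly_eq0 size_B.
set c := r`_k / lead_coef (B k).
have szr' : (size (r - c *: B k)%R <= k)%N.
  apply/leq_sizeP => j; rewrite leq_eqVlt coefB coefZ => /orP [/eqP <- | ltkj].
    by rewrite -[(B k)`_k]/((B k)`_(k.+1).-1) -size_B // -lead_coefE divfK // subrr.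
  by rewrite !nth_default ?size_B ?mulr0 ?subrr //; apply: leq_trans szr ltkj.
by rewrite -(subrK (c *: B k) r) LD LZ LB // mulr0 addr0 IH // ltnW.
Qed.

End GradedBasis.

Lemma eq_horner0_addMX (K : nzRingType) (P Q : {poly K}) t :
  (size P <= t.+1)%N -> (size Q <= t.+1)%N -> Q.[0]%R = P.[0]%R ->
  exists2 r : {poly K}, (size r <= t)%N & Q = (P + r * 'X)%R.
Proof.
move=> szP szQ QP0.
have [r QPr] : exists r, (Q - P)%R = (r * ('X - 0%:P))%R.
  by apply/factor_theorem; rewrite /root hornerD hornerN QP0 subrr.
rewrite polyC0 subr0 in QPr; exists r; last by rewrite -QPr addrC subrK.
have [-> | r_neq0] := eqVneq r 0%R; first by rewrite size_poly0.
rewrite -ltnS -(size_mulX r_neq0) -QPr (leq_trans (size_polyD _ _)) //.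
by rewrite geq_max szQ size_polyN.
Qed.

Lemma continuous_horner (p : {poly R}) x : continuous (horner p) x.
Proof.
elim/poly_ind: p => [|p c IH].
  by apply: (continuous_ext (fun _ => 0)) => [y|]; rewrite ?horner0 //; apply: continuous_const.
apply: (continuous_ext (fun y => horner p y * y + c)) => [y|].
  by rewrite hornerMXaddC.
apply: continuous_plus; last exact: continuous_const.
by apply: continuous_mult => //; apply: continuous_id.
Qed.

Lemma continuous_horner_sqr (p : {poly R}) x : continuous (fun y => horner p y ^ 2) x.
Proof.
apply: (continuous_comp (horner p) (fun u => u ^ 2)); first exact: continuous_horner.
by apply: ex_derive_continuous; auto_derive.
Qed.

Lemma continuous_Rmax0 (f : R -> R) x :
  continuous f x -> continuous (fun y => Rmax (f y) 0) x.
Proof.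
move=> fc; apply: (continuous_ext (fun y => (f y + Rabs (f y)) * / 2)) => [y|].
  rewrite /Rmax; case: Rle_dec => h; [rewrite Rabs_left1 | rewrite Rabs_right]; lra.
apply: continuous_mult; last exact: continuous_const.
by apply: continuous_plus => //; apply: continuous_Rabs_comp.
Qed.

Lemma ex_RInt_continuous_le (f : R -> R) a b :
  a <= b -> (forall x, a <= x <= b -> continuous f x) -> ex_RInt f a b.
Proof.
move=> ab fc; apply: ex_RInt_continuous => x.
by rewrite Rmin_left // Rmax_right //; apply: fc.
Qed.

Lemma RInt_inversion (f : R -> R) a b : 0 < a -> a <= b ->
  (forall x, a <= x <= b -> continuous f x) ->
  RInt f a b = RInt (fun y => f (a * b / y) * (a * b / y ^ 2)) a b.
Proof.
move=> a_gt0 ab fc.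
have inv_ab x : a <= x <= b -> a <= a * b / x <= b.
  by move=> [ax xb]; split; [apply/Rle_div_r | apply/Rle_div_l]; nra.
have comp : is_RInt (fun y => - (a * b / y ^ 2) * f (a * b / y)) b a (RInt f a b).
  have -> : RInt f a b = RInt f (a * b / b) (a * b / a) by congr RInt; field; lra.
  apply: is_RInt_comp; rewrite Rmin_right // Rmax_left // => x hx.
    exact/fc/inv_ab.
  split; first by auto_derive; [lra | field; lra].
  by apply: ex_derive_continuous; auto_derive; rewrite Rmult_1_r; apply: Rgt_not_eq; nra.
symmetry; apply: is_RInt_unique.
apply: (is_RInt_ext (fun y => Hierarchy.opp (- (a * b / y ^ 2) * f (a * b / y)))).
  by move=> x _; rewrite /Hierarchy.opp /=; ring.
by rewrite -[RInt f a b]opp_opp; apply/is_RInt_opp/is_RInt_swap.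
Qed.

Section InverseMoment.

Variables (a b : R) (w : R -> R).
Hypothesis a_gt0 : 0 < a.
Hypothesis a_le_b : a <= b.
Hypothesis w_cont : forall x, a <= x <= b -> continuous w x.
Hypothesis w_ge0 : forall x, a <= x <= b -> 0 <= w x.

Lemma ex_RInt_weighted (g : R -> R) :
  (forall x, a <= x <= b -> continuous g x) -> ex_RInt (fun x => g x * w x) a b.
Proof.
move=> gc; apply: ex_RInt_continuous_le => // x hx.
by apply: continuous_mult; [apply: gc | apply: w_cont].
Qed.

Definition inner (p q : {poly R}) : R :=
  RInt (fun x => horner p x * horner q x * w x) a b.

Lemma ex_RInt_inner p q : ex_RInt (fun x => horner p x * horner q x * w x) a b.
Proof.
by apply: ex_RInt_weighted => x _; apply: continuous_mult; apply: continuous_horner.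
Qed.

Lemma innerD p q1 q2 : inner p (q1 + q2)%R = inner p q1 + inner p q2.
Proof.
rewrite -[_ + _]/(plus (inner p q1) (inner p q2)) /inner -RInt_plus; try exact: ex_RInt_inner.
by apply: RInt_ext => x _; rewrite hornerD -RplusE /plus /=; ring.
Qed.

Lemma innerZ p c q : inner p (c *: q)%R = c * inner p q.
Proof.
rewrite -[c * _]/(@scal _ R_ModuleSpace c (inner p q)) /inner -RInt_scal; last exact: ex_RInt_inner.
by apply: RInt_ext => x _; rewrite hornerZ -RmultE /scal /= /mult /=; ring.
Qed.

Lemma inner_orthogonal_low_degree (Pi : nat -> {poly R}) t :
  (forall k, size (Pi k) = k.+1) ->
  (forall i j, i <> j -> inner (Pi i) (Pi j) = 0) ->
  forall r : {poly R}, (size r <= t)%N -> inner (Pi t) r = 0.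
Proof.
move=> size_Pi orth; apply: (graded_basis_annihilator (B := Pi)) => //.
- exact: innerD.
- exact: innerZ.
- by move=> k ltkt; apply: orth => /eqP; rewrite gtn_eqF.
Qed.

Lemma inverse_moment_orthogonal_min (P Q : {poly R}) t :
  (size P <= t.+1)%N -> (size Q <= t.+1)%N -> horner Q 0 = horner P 0 ->
  (forall r : {poly R}, (size r <= t)%N -> inner P r = 0) ->
  RInt (fun x => horner P x ^ 2 * / x * w x) a b
  <= RInt (fun x => horner Q x ^ 2 * / x * w x) a b.
Proof.
move=> szP szQ QP0 orthP.
have [r szr QPr] := eq_horner0_addMX szP szQ QP0.
have ex_P2 : ex_RInt (fun x => horner P x ^ 2 * / x * w x) a b.
  apply: ex_RInt_weighted => x hx; apply: continuous_mult; first exact: continuous_horner_sqr.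
  by apply: continuous_Rinv; lra.
have ex_r2 : ex_RInt (fun x => horner r x ^ 2 * x * w x) a b.
  apply: ex_RInt_weighted => x _; apply: continuous_mult; first exact: continuous_horner_sqr.
  exact: continuous_id.
have -> : RInt (fun x => horner Q x ^ 2 * / x * w x) a b
          = RInt (fun x => horner P x ^ 2 * / x * w x) a b + 2 * inner P r
            + RInt (fun x => horner r x ^ 2 * x * w x) a b.
  apply: is_RInt_unique.
  apply: (is_RInt_ext _ _ _ _ _ _ (is_RInt_plus _ _ _ _ _ _
            (is_RInt_plus _ _ _ _ _ _ (RInt_correct _ _ _ ex_P2)
               (is_RInt_scal _ _ _ 2 _ (RInt_correct _ _ _ (ex_RInt_inner P r))))
            (RInt_correct _ _ _ ex_r2))).
  move=> x; rewrite Rmin_left // Rmax_right // => hx.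
  rewrite QPr hornerD hornerMX -RplusE -RmultE /plus /scal /= /mult /=.
  by set u := horner P x; set v := horner r x; field; lra.
have r2_ge0 : 0 <= RInt (fun x => horner r x ^ 2 * x * w x) a b.
  apply: RInt_ge_0 => // x hx.
  by apply: Rmult_le_pos; [apply: Rmult_le_pos; [apply: pow2_ge_0 | lra] | apply: w_ge0; lra].
by rewrite orthP //; lra.
Qed.

End InverseMoment.

Lemma mp_edges rho : 0 < rho < 1 ->
  0 < mp_a rho /\ mp_a rho <= mp_b rho /\ mp_a rho * mp_b rho = (1 - rho) ^ 2.
Proof.
move=> rho01; rewrite /mp_a /mp_b; set s := sqrt rho.
have s2 : s * s = rho by apply: sqrt_sqrt; lra.
have s_gt0 : 0 < s by apply: sqrt_lt_R0; lra.
have s_lt1 : s < 1 by nra.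
split; [|split]; [nra | nra | rewrite -s2; ring].
Qed.

Lemma mp_denominator_gt0 rho x : 0 < rho -> 0 < x -> 0 < 2 * PI * rho * x.
Proof.
move=> rho_gt0 x_gt0; have pi2_gt0 : 0 < 2 * PI by have := PI_RGT_0; lra.
by apply: Rmult_lt_0_compat => //; apply: Rmult_lt_0_compat.
Qed.

Lemma continuous_mp_density rho x : 0 < rho -> 0 < x -> continuous (mp_density rho) x.
Proof.
move=> rho_gt0 x_gt0; rewrite /mp_density.
apply: continuous_mult.
  apply: continuous_sqrt_comp; apply: continuous_mult;
    by apply: continuous_Rmax0; apply: ex_derive_continuous; auto_derive.
apply: continuous_Rinv_comp; first by apply: ex_derive_continuous; auto_derive.
by apply: Rgt_not_eq; apply: mp_denominator_gt0.
Qed.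

Lemma mp_density_ge0 rho x : 0 < rho -> 0 < x -> 0 <= mp_density rho x.
Proof.
move=> rho_gt0 x_gt0; apply: Rdiv_le_0_compat; first exact: sqrt_pos.
exact: mp_denominator_gt0.
Qed.

Lemma Rmax0_scale k u : 0 <= k -> Rmax (k * u) 0 = k * Rmax u 0.
Proof. by move=> k_ge0; rewrite -RmaxRmult // Rmult_0_r. Qed.

Lemma mp_density_inversion rho y : 0 < rho < 1 -> 0 < y ->
  mp_density rho ((1 - rho) ^ 2 / y) = (1 - rho) * y / (1 - rho) ^ 2 * mp_density rho y.
Proof.
move=> rho01 y_gt0; have [a_gt0 [ab c_ab]] := mp_edges rho01.
rewrite /mp_density; set a := mp_a rho in a_gt0 ab c_ab *; set b := mp_b rho in ab c_ab *.
have -> : b - (1 - rho) ^ 2 / y = b / y * (y - a) by rewrite -c_ab; field; lra.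
have -> : (1 - rho) ^ 2 / y - a = a / y * (b - y) by rewrite -c_ab; field; lra.
rewrite !Rmax0_scale; try (apply: Rdiv_le_0_compat; lra).
have -> : b / y * Rmax (y - a) 0 * (a / y * Rmax (b - y) 0)
          = ((1 - rho) / y) ^ 2 * (Rmax (b - y) 0 * Rmax (y - a) 0).
  have -> : ((1 - rho) / y) ^ 2 = a * b / y ^ 2 by rewrite c_ab; field; lra.
  by field; lra.
rewrite sqrt_mult_alt ?sqrt_pow2; try (apply: pow2_ge_0 || (apply: Rdiv_le_0_compat; lra)).
have pi_gt0 := PI_RGT_0; field; repeat split; lra.
Qed.

Lemma Lcost_inversion rho (p : {poly R}) : 0 < rho < 1 ->
  Lcost rho p = (1 - rho) *
    RInt (fun x => horner p (Rdiv x ((1 - rho) ^ 2)) ^ 2 * / x * mp_density rho x)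
         (mp_a rho) (mp_b rho).
Proof.
move=> rho01; have [a_gt0 [ab c_ab]] := mp_edges rho01.
have c_gt0 : 0 < (1 - rho) ^ 2 by apply: pow_lt; lra.
have dens_cont x : mp_a rho <= x <= mp_b rho -> continuous (mp_density rho) x.
  by move=> hx; apply: continuous_mp_density; lra.
rewrite /Lcost RInt_inversion //; last first.
  move=> x hx; apply: continuous_mult; last exact: dens_cont.
  by apply: (continuous_comp Rinv (fun u => horner p u ^ 2));
    [apply: continuous_Rinv; lra | apply: continuous_horner_sqr].
rewrite -[(1 - rho) * _]/(@scal _ R_ModuleSpace (1 - rho) (RInt _ _ _)) -RInt_scal; last first.
  apply: ex_RInt_weighted => // x hx; apply: continuous_mult.
    apply: (continuous_comp (fun u => u / (1 - rho) ^ 2) (fun u => horner p u ^ 2)).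
      by apply: ex_derive_continuous; auto_derive; lra.
    exact: continuous_horner_sqr.
  by apply: continuous_Rinv; lra.
apply: RInt_ext => x; rewrite Rmin_left // Rmax_right // => hx.
rewrite c_ab mp_density_inversion; try lra.
have -> : / ((1 - rho) ^ 2 / x) = x / (1 - rho) ^ 2 by field; lra.
by rewrite /scal /= /mult /=; field; lra.
Qed.

(* The argument of [horner] is parsed in [ring_scope], hence the explicit [Rmult]. *)
Lemma horner_rescale c (P : {poly R}) x : horner (rescale_poly c P) x = horner P (Rmult c x).
Proof. by rewrite /rescale_poly horner_comp hornerZ hornerX. Qed.

Lemma Rt0_rescale c t (P : {poly R}) : c <> 0 -> Rt0 t P -> Rt0 t (rescale_poly c P).
Proof.
move=> /eqP c_neq0 [szP P0]; split; last by rewrite horner_rescale Rmult_0_r.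
by rewrite /rescale_poly (@size_comp_poly2 R) // size_scale // size_polyX.
Qed.

Lemma Lcost_orthogonal_min rho (Pi : nat -> {poly R}) t q :
  0 < rho < 1 -> mp_orthogonal_family rho Pi -> Rt0 t q ->
  Lcost rho (rescale_poly ((1 - rho) ^ 2) (Pi t)) <= Lcost rho q.
Proof.
move=> rho01 [size_Pi [Pi0 orth]] qt.
have [a_gt0 [ab _]] := mp_edges rho01.
have dens_cont x : mp_a rho <= x <= mp_b rho -> continuous (mp_density rho) x.
  by move=> hx; apply: continuous_mp_density; lra.
have dens_ge0 x : mp_a rho <= x <= mp_b rho -> 0 <= mp_density rho x.
  by move=> hx; apply: mp_density_ge0; lra.
have c_gt0 : 0 < (1 - rho) ^ 2 by apply: pow_lt; lra.
have [szQ Q0] : Rt0 t (rescale_poly (/ (1 - rho) ^ 2) q).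
  by apply: Rt0_rescale => //; apply: Rinv_neq_0_compat; lra.
rewrite !Lcost_inversion //; apply: Rmult_le_compat_l; first lra.
rewrite (RInt_ext _ (fun x => horner (Pi t) x ^ 2 * / x * mp_density rho x)); last first.
  move=> x _; rewrite horner_rescale.
  by have -> : (1 - rho) ^ 2 * (x / (1 - rho) ^ 2) = x by field; lra.
rewrite (RInt_ext (fun x => horner q (Rdiv x _) ^ 2 * _ * _)
           (fun x => horner (rescale_poly (/ (1 - rho) ^ 2) q) x ^ 2 * / x * mp_density rho x));
  last by move=> x _; rewrite horner_rescale (Rmult_comm (/ _)).
apply: (inverse_moment_orthogonal_min a_gt0 ab dens_cont dens_ge0 (t := t)) => //.
- by rewrite size_Pi.
- by rewrite Q0 Pi0.
- exact: (inner_orthogonal_low_degree ab dens_cont size_Pi orth).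
Qed.

Theorem lemma3 (gamma xi : R) (t : nat) :
  0 < gamma -> gamma < xi -> xi < 1 ->
  let rho := gamma / xi in
  (forall (p : {poly R}) (ratio : nat -> R),
     Rt0 t p ->
     is_lim_seq ratio (Lcost rho p) ->
     is_lim_seq ratio
       ((1 - rho) *
        RInt (fun x => (horner p (Rdiv x ((1 - rho) ^ 2))) ^ 2 * / x * mp_density rho x)
             (mp_a rho) (mp_b rho)))
  /\
  (forall Pi : nat -> {poly R},
     mp_orthogonal_family rho Pi ->
     let Pibar := rescale_poly ((1 - rho) ^ 2) (Pi t) in
     Rt0 t Pibar /\ (forall q, Rt0 t q -> Lcost rho Pibar <= Lcost rho q)).
Proof.
move=> gamma_gt0 gamma_lt_xi xi_lt1 rho.
have rho01 : 0 < rho < 1.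
  have xi_gt0 : 0 < xi by lra.
  by split; [exact: Rdiv_lt_0_compat | apply/(Rdiv_lt_1 _ _ xi_gt0)].
split.
  by move=> p ratio _; rewrite Lcost_inversion.
move=> Pi fam Pibar; split; last by move=> q; apply: Lcost_orthogonal_min.
have [size_Pi [Pi0 _]] := fam.
apply: Rt0_rescale; first by apply: pow_nonzero; lra.
by split; rewrite ?size_Pi.
Qed.
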